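(* Let $\mathcal A$ be a commutative semiring, $V=\mathcal A^{(n)}$ free with basis $b_1,\dots,b_n$ (or $b_0,\dots,b_{n-1}$), and $\mathfrak G(V)$ its standard reduced Grassmann semialgebra. Let $2\le k<n$ and $u,u'\in\mathfrak G(V)_k$. (i) If $u\wedge v=u'\wedge v$ for all $v\in\mathfrak G(V)_{n-k}$, then $u=u'$. (ii) If $u\notin\overline{\mathfrak G(V)_k^\circ}$, then there is some $v\in\mathfrak G(V)_{n-k}$ with $u\wedge v\notin\overline{\mathfrak G(V)_n^\circ}$.
   Context: $\mathfrak G(V)=\bigoplus_r\mathfrak G(V)_r$ with $\mathfrak G(V)_0=\mathcal A$, $\mathfrak G(V)_1=V$, and for $r\ge2$, $\mathfrak G(V)_r$ the free $\mathcal A$-module with basis $\{b_I,b_I':|I|=r\}$ where $b_I=b_{i_1}\wedge\cdots\wedge b_{i_r}$ for increasing indices and $b_I'=(-)b_I$; $(-)$ is the $\mathcal A$-linear involution of $\mathfrak G(V)_r$ ($r\ge2$) exchanging $b_I$ and $b_I'$, compatible with the associative graded product $\wedge$, which satisfies $b_i\wedge b_i=\mathbb 0$ and $u\wedge w=(-)(w\wedge u)$ for $u,w\in V$. A quasi-zero is an element $x+(-)x$. $\overline{\mathfrak G^\circ}$ denotes the ideal of $\mathfrak G(V)$ generated by all quasi-zeros and all elements $w\wedge w$, $w\in V$, and $\overline{\mathfrak G(V)_r^\circ}$ its degree-$r$ part. *)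

From HB Require Import structures.
From mathcomp Require Import all_boot all_order all_algebra.
Set Implicit Arguments. Unset Strict Implicit. Unset Printing Implicit Defensive.
Import GRing.Theory.
Local Open Scope ring_scope.

(* An element of G(V) = (+)_r G(V)_r is encoded by its coefficients on the
   "signed basis" indexed by pairs (I, s) with I a subset of 'I_n and s : bool:
     (I, false) <-> b_I,   (I, true) <-> b_I' = (-) b_I   (only for #|I| >= 2).
   (I, true) with #|I| <= 1 is not a basis element: well-formed elements have
   coefficient 0 there.  (set0,false) is the unit 1 spanning G(V)_0 = A, and
   ([set i], false) is b_i spanning G(V)_1 = V. *)

Section Grassmann.
Variables (n : nat) (A : comPzSemiRingType).

Definition gidx := ({set 'I_n} * bool)%type.
Definition grass := {ffun gidx -> A}.

Definition gwf (x : grass) : Prop := forall p : gidx, p.2 -> (#|p.1| < 2)%N -> x p = 0.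

Definition ghom (r : nat) (x : grass) : Prop :=
  gwf x /\ forall p : gidx, #|p.1| <> r -> x p = 0.

Definition gadd (x y : grass) : grass := [ffun p => x p + y p].
Definition gzero : grass := [ffun _ => 0].

Definition ginv (x : grass) : grass :=
  [ffun p : gidx => if (2 <= #|p.1|)%N then x (p.1, ~~ p.2) else x p].

(* parity of the shuffle sorting the concatenation of I and J *)
Definition shuffle_sign (I J : {set 'I_n}) : bool :=
  odd #|[set q : 'I_n * 'I_n | [&& q.1 \in I, q.2 \in J & (q.2 < q.1)%N]]|.

(* the wedge product, bilinear extension of
   b_I ^ b_J = 0 if I, J meet; else b_{I u J} or b_{I u J}' by shuffle sign;
   and b_I' ^ b_J = b_I ^ b_J' = (-)(b_I ^ b_J). *)
Definition gwedge (x y : grass) : grass :=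
  [ffun K : gidx => \sum_(q : gidx * gidx |
       [&& [disjoint q.1.1 & q.2.1], q.1.1 :|: q.2.1 == K.1 &
           q.1.2 (+) q.2.2 (+) shuffle_sign q.1.1 q.2.1 == K.2])
     x q.1 * y q.2].

Definition quasi_zero (z : grass) : Prop :=
  exists x : grass, [/\ gwf x, (forall p : gidx, (#|p.1| < 2)%N -> x p = 0)
                      & z = gadd x (ginv x)].

Definition gen_circ (z : grass) : Prop :=
  quasi_zero z \/ exists w : grass, ghom 1 w /\ z = gwedge w w.

Inductive in_Gcirc : grass -> Prop :=
| Gcirc_gen z : gen_circ z -> in_Gcirc z
| Gcirc_0 : in_Gcirc gzero
| Gcirc_add z z' : in_Gcirc z -> in_Gcirc z' -> in_Gcirc (gadd z z')
| Gcirc_mull a z : gwf a -> in_Gcirc z -> in_Gcirc (gwedge a z)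
| Gcirc_mulr z a : gwf a -> in_Gcirc z -> in_Gcirc (gwedge z a).

Definition Gcirc_deg (r : nat) (z : grass) : Prop := ghom r z /\ in_Gcirc z.

End Grassmann.

From mathcomp Require Import all_boot all_order all_algebra.
Set Implicit Arguments. Unset Strict Implicit. Unset Printing Implicit Defensive.
Import GRing.Theory.
Local Open Scope ring_scope.

(* Wedging with the complementary basis vector b_{~I} is a perfect pairing:
   the top-degree coefficients of u ^ b_{~I} are the coefficients of u at
   b_I and b_I', up to the shuffle sign.  This gives (i).  For (ii), every
   generator of the ideal, hence every element of it, has equal coefficients
   at b_K and b_K'.  If u has this symmetry it is itself a quasi-zero; if not,
   some u ^ b_{~I} lacks it in top degree and so lies outside the ideal. *)

Section Grassmann.
Variables (n : nat) (A : comPzSemiRingType).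
Implicit Types (u w z : grass n A) (I J X : {set 'I_n}).

Definition sign_symmetric z : Prop := forall K s, z (K, s) = z (K, ~~ s).

Lemma shuffle_sign1 (i j : 'I_n) : shuffle_sign [set i] [set j] = (j < i)%N.
Proof.
rewrite /shuffle_sign; case: (ltnP j i) => ji.
  suff -> : [set q : 'I_n * 'I_n | [&& q.1 \in [set i], q.2 \in [set j]
                                       & (q.2 < q.1)%N]] = [set (i, j)].
    by rewrite cards1.
  apply/setP => -[a b]; rewrite !inE /= xpair_eqE.
  by case: eqP => [->|] //=; case: eqP => [->|] //=; rewrite ji.
suff -> : [set q : 'I_n * 'I_n | [&& q.1 \in [set i], q.2 \in [set j]
                                     & (q.2 < q.1)%N]] = set0.
  by rewrite cards0.
apply/setP => -[a b]; rewrite !inE /=.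
by case: eqP => [->|] //=; case: eqP => [->|] //=; rewrite ltnNge ji.
Qed.

Lemma quasi_zero_sign_symmetric z : quasi_zero z -> sign_symmetric z.
Proof.
move=> [x [_ x_low ->]] K s; rewrite !ffunE /=.
by case: (leqP 2 #|K|) => K2 /=; [rewrite negbK addrC | rewrite !x_low].
Qed.

Lemma ghom1_support w I t :
  ghom 1 w -> w (I, t) != 0 -> exists i, I = [set i] /\ t = false.
Proof.
move=> [w_wf w_deg] /eqP w_nz.
have I1 : #|I| = 1%N.
  by apply/eqP/negP => /negP I1; apply: w_nz; apply: w_deg; apply/eqP.
have [i ->] := cards1P (introT eqP I1); exists i; split => //.
by case: t w_nz => // w_nz; exfalso; apply: w_nz; apply: (w_wf (_, true)); rewrite //= I1.
Qed.

(* Swapping the factors of b_i ^ b_j flips the shuffle sign, and the two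
   resulting terms of w ^ w are exchanged by the involution. *)
Lemma wedge_square_sign_symmetric w : ghom 1 w -> sign_symmetric (gwedge w w).
Proof.
move=> w1 K s; rewrite !ffunE.
rewrite [RHS](reindex_inj (h := fun q : gidx n * gidx n => (q.2, q.1))); last first.
  by move=> [a b] [c d] /= [-> ->].
rewrite /= big_mkcond [RHS]big_mkcond; apply: eq_bigr => -[[I t1] [J t2]] _ /=.
have [->|nzI] := eqVneq (w (I, t1)) 0.
  by rewrite !mul0r mulr0; case: ifP; case: ifP.
have [->|nzJ] := eqVneq (w (J, t2)) 0.
  by rewrite !mul0r mulr0; case: ifP; case: ifP.
have [i [-> ->]] := ghom1_support w1 nzI; have [j [-> ->]] := ghom1_support w1 nzJ.
rewrite mulrC !shuffle_sign1 setUC.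
have [->|ij] := eqVneq i j; first by rewrite disjoints1 in_set1 eqxx.
rewrite !disjoints1 !in_set1 [j == i]eq_sym ij /=.
have -> : (j < i)%N = ~~ (i < j)%N by rewrite -leqNgt ltn_neqAle eq_sym ij.
by case: (i < j)%N; case: s.
Qed.

Lemma gwedgel_sign_symmetric w z : sign_symmetric z -> sign_symmetric (gwedge w z).
Proof.
move=> z_sym K s; rewrite !ffunE.
rewrite [RHS](reindex_inj (h := fun q : gidx n * gidx n => (q.1, (q.2.1, ~~ q.2.2))));
  last by move=> [a1 [b1 c1]] [a2 [b2 c2]] /= [-> -> /negb_inj ->].
apply: eq_big => -[[I t1] [J t2]] /=; last by rewrite z_sym.
by case: t1; case: t2; case: s; case: shuffle_sign.
Qed.

Lemma gwedger_sign_symmetric w z : sign_symmetric z -> sign_symmetric (gwedge z w).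
Proof.
move=> z_sym K s; rewrite !ffunE.
rewrite [RHS](reindex_inj (h := fun q : gidx n * gidx n => ((q.1.1, ~~ q.1.2), q.2)));
  last by move=> [[b1 c1] a1] [[b2 c2] a2] /= [-> /negb_inj -> ->].
apply: eq_big => -[[I t1] [J t2]] /=; last by rewrite z_sym.
by case: t1; case: t2; case: s; case: shuffle_sign.
Qed.

Lemma in_Gcirc_sign_symmetric z : in_Gcirc z -> sign_symmetric z.
Proof.
elim=> {z} [z [/quasi_zero_sign_symmetric|[w [w1 ->]]] | | z z' _ zs _ z's | | ] //.
- exact: wedge_square_sign_symmetric.
- by move=> K s; rewrite !ffunE.
- by move=> K s; rewrite !ffunE zs z's.
- by move=> w z _ _; apply: gwedgel_sign_symmetric.
- by move=> z w _ _; apply: gwedger_sign_symmetric.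
Qed.

Definition gbasis J : grass n A := [ffun p => if p == (J, false) then 1 else 0].

Lemma gbasis_compl_hom I : ghom (n - #|I|) (gbasis (~: I)).
Proof.
split=> [[J t] /= -> _|[J t] /= JI]; rewrite ffunE; first by rewrite xpair_eqE andbF.
case: eqP => // -[eJ _]; case: JI.
by rewrite eJ cardsCs setCK card_ord.
Qed.

Lemma disjoint_cover_setC X I : [disjoint X & ~: I] -> X :|: ~: I = setT -> X = I.
Proof.
move=> XI XIT; apply/eqP; rewrite eqEsubset -{1}(setCK I) -disjoints_subset XI /=.
apply/subsetP => x xI.
by have := in_setT x; rewrite -XIT inE in_setC xI orbF.
Qed.

Lemma gwedge_gbasis_compl u I s :
  gwedge u (gbasis (~: I)) (setT, s) = u (I, s (+) shuffle_sign I (~: I)).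
Proof.
rewrite ffunE (bigD1 ((I, s (+) shuffle_sign I (~: I)), (~: I, false))) /=; last first.
  rewrite setUCr eqxx disjoints_subset setCK subxx /=.
  by case: s; case: shuffle_sign.
rewrite ffunE eqxx mulr1 big1 ?addr0 // => -[[X t1] [J t2]] /=.
move=> /andP[/and3P[XJ /eqP XJT sign] neq]; rewrite ffunE.
case: eqP => [[eJ et2]|]; last by rewrite mulr0.
subst J t2; have eX := disjoint_cover_setC XJ XJT; subst X.
move: neq sign; rewrite !xpair_eqE !eqxx /= andbT.
by case: t1; case: s; case: shuffle_sign.
Qed.

Lemma gwedge_compl_inj k u u' : ghom k u -> ghom k u' ->
  (forall v, ghom (n - k) v -> gwedge u v = gwedge u' v) -> u = u'.
Proof.
move=> [_ u_deg] [_ u'_deg] eq_wedge; apply/ffunP => -[I s].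
have [Ik|] := eqVneq #|I| k; last by move/eqP=> Ik; rewrite u_deg ?u'_deg.
have := gbasis_compl_hom I; rewrite Ik => /eq_wedge/ffunP.
move=> /(_ (setT, s (+) shuffle_sign I (~: I))).
by rewrite !gwedge_gbasis_compl addbK.
Qed.

Lemma sign_symmetric_quasi_zero k u :
  (2 <= k)%N -> ghom k u -> (forall I, u (I, false) = u (I, true)) -> quasi_zero u.
Proof.
move=> k2 [u_wf u_deg] u_sym.
exists [ffun p : gidx n => if (2 <= #|p.1|)%N && ~~ p.2 then u p else 0]; split.
- by move=> [K t] /= ->; rewrite ffunE andbF.
- by move=> [K t] /= K2; rewrite ffunE leqNgt K2.
apply/ffunP => -[K s]; rewrite !ffunE /=.
have [K2|K2] := leqP 2 #|K|; first by case: s; rewrite /= ?addr0 ?add0r u_sym.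
by rewrite addr0 u_deg //= => Kk; move: K2; rewrite Kk ltnNge k2.
Qed.

Lemma gwedge_compl_notin_Gcirc k u : (2 <= k)%N -> ghom k u -> ~ Gcirc_deg k u ->
  exists v, ghom (n - k) v /\ ~ Gcirc_deg n (gwedge u v).
Proof.
move=> k2 uk u_notin.
have [I /eqP uI] : exists I, u (I, false) != u (I, true).
  apply/existsP; apply: contraT; rewrite negb_exists => /forallP u_sym.
  exfalso; apply: u_notin; split; [exact: uk | apply: Gcirc_gen; left].
  by apply: sign_symmetric_quasi_zero k2 uk _ => I; apply/eqP/negPn.
have Ik : #|I| = k.
  by apply/eqP/negP => /negP Ik; apply: uI; rewrite !uk.2 //; apply/eqP.
exists (gbasis (~: I)); rewrite -Ik; split; first exact: gbasis_compl_hom.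
move=> [_ /in_Gcirc_sign_symmetric /(_ setT (shuffle_sign I (~: I)))].
by rewrite !gwedge_gbasis_compl addbb; case: shuffle_sign => /= e; apply: uI.
Qed.

End Grassmann.

Theorem proposition2p16 (A : comPzSemiRingType) (n k : nat) :
  (2 <= k)%N -> (k < n)%N ->
  forall u u' : grass n A, ghom k u -> ghom k u' ->
  ((forall v : grass n A, ghom (n - k) v -> gwedge u v = gwedge u' v) -> u = u') /\
  (~ Gcirc_deg k u ->
     exists v : grass n A, ghom (n - k) v /\ ~ Gcirc_deg n (gwedge u v)).
Proof.
move=> k2 _ u u' uk u'k; split; first exact: gwedge_compl_inj uk u'k.
exact: gwedge_compl_notin_Gcirc.
Qed.
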